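(* Let $\kappa$ be an uncountable regular cardinal, let $\mathcal{I}$ be a $\kappa$-complete proper ideal on $\kappa$ containing every bounded subset of $\kappa$, and suppose $\mathcal{I}$ contains an unbounded subset of $\kappa$. Let $\nu\in\{2,\kappa\}$. Then for every $1\le\alpha<\kappa^+$, neither $\boldsymbol{\Sigma}^0_\alpha({}^{\kappa}\nu,\tau_{\mathcal{I}})$ nor $\boldsymbol{\Pi}^0_\alpha({}^{\kappa}\nu,\tau_{\mathcal{I}})$ has a ${}^{\kappa}2$-universal set.
   Context: ${}^{\kappa}\nu$ is the set of functions $\kappa\to\nu$; $\tau_{\mathcal{I}}$ is the topology generated by the sets $\mathbf{N}_f=\{x:f\subseteq x\}$ for $f\colon D\to\nu$ with $D\in\mathcal{I}$. For a topological space $X$: $\boldsymbol{\Sigma}^0_1(X)$ = open sets, $\boldsymbol{\Pi}^0_1(X)$ = closed sets; for $\alpha>1$, $\boldsymbol{\Sigma}^0_\alpha(X)$ consists of unions $\bigcup_{\gamma<\kappa}A_\gamma$ with $A_\gamma\in\bigcup_{1\le\beta<\alpha}\boldsymbol{\Pi}^0_\beta(X)$, and $\boldsymbol{\Pi}^0_\alpha(X)$ the complements of $\boldsymbol{\Sigma}^0_\alpha(X)$ sets. For a class $\boldsymbol{\Gamma}$ and spaces $Y,X$, a set $\mathcal{U}\subseteq Y\times X$ is $Y$-universal for $\boldsymbol{\Gamma}(X)$ if $\mathcal{U}\in\boldsymbol{\Gamma}(Y\times X)$ and $\boldsymbol{\Gamma}(X)=\{\mathcal{U}_y: y\in Y\}$,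 where $\mathcal{U}_y=\{x:(y,x)\in\mathcal{U}\}$. Here $Y={}^{\kappa}2$ and $X=({}^{\kappa}\nu,\tau_{\mathcal{I}})$ (the conclusion holds whatever topology is placed on $Y\times X$). *)

(* Plain Rocq (no library needed): sets are predicates T -> Prop, and all
   classes below are closed under extensional equality of sets. *)

Definition eqset {T : Type} (A B : T -> Prop) : Prop := forall x, A x <-> B x.

Definition inj {A B : Type} (f : A -> B) : Prop := forall a b, f a = f b -> a = b.

Definition is_strict_wellorder {O : Type} (lt : O -> O -> Prop) : Prop :=
  well_founded lt /\
  (forall x y z, lt x y -> lt y z -> lt x z) /\
  (forall x y, lt x y \/ x = y \/ lt y x).

(* (K, lt) is an initial ordinal: every proper initial segment has
   cardinality strictly smaller than K. *)
Definition is_cardinal {K : Type} (lt : K -> K -> Prop) : Prop :=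
  forall x : K, ~ exists f : K -> {y : K | lt y x}, inj f.

Definition bounded {K : Type} (lt : K -> K -> Prop) (B : K -> Prop) : Prop :=
  exists x, forall y, B y -> lt y x.

Definition is_regular {K : Type} (lt : K -> K -> Prop) : Prop :=
  forall B : K -> Prop, ~ bounded lt B -> exists f : K -> {y : K | B y}, inj f.

Definition uncountable (K : Type) : Prop := ~ exists f : K -> nat, inj f.

(* Unions of fewer than kappa sets are indexed by proper initial segments
   {i | i < x} of kappa. *)
Definition kappa_complete_proper_ideal {K : Type} (lt : K -> K -> Prop)
    (I : (K -> Prop) -> Prop) : Prop :=
  (forall A B, I B -> (forall y, A y -> B y) -> I A) /\
  (forall (f : K -> K -> Prop) (x : K),
      (forall i, lt i x -> I (f i)) -> I (fun y => exists i, lt i x /\ f i y)) /\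
  ~ I (fun _ => True).

Definition is_topology {T : Type} (op : (T -> Prop) -> Prop) : Prop :=
  (forall A B, eqset A B -> op A -> op B) /\
  op (fun _ => True) /\
  (forall F : (T -> Prop) -> Prop, (forall C, F C -> op C) ->
      op (fun x => exists C, F C /\ C x)) /\
  (forall A B, op A -> op B -> op (fun x => A x /\ B x)).

Inductive gen_open {T : Type} (Bs : (T -> Prop) -> Prop) : (T -> Prop) -> Prop :=
| go_basic A B : Bs B -> eqset A B -> gen_open Bs A
| go_full A : eqset A (fun _ => True) -> gen_open Bs A
| go_union A (F : (T -> Prop) -> Prop) :
    (forall C, F C -> gen_open Bs C) ->
    eqset A (fun x => exists C, F C /\ C x) -> gen_open Bs A
| go_inter A C D : gen_open Bs C -> gen_open Bs D ->
    eqset A (fun x => C x /\ D x) -> gen_open Bs A.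

(* tau_I on ^kappa nu (nu represented by the type V): generated by the
   N_f = {x | f ⊆ x}, f : D -> V, D ∈ I  (f given as g restricted to D). *)
Definition tauI {K V : Type} (I : (K -> Prop) -> Prop) : ((K -> V) -> Prop) -> Prop :=
  gen_open (fun B => exists (D : K -> Prop) (g : K -> V),
                I D /\ eqset B (fun x => forall i, D i -> x i = g i)).

(* The ordinal alpha (1 <= alpha < kappa^+) is represented by an element o of a
   well-ordered type (O, ltO) with |O| <= kappa: alpha = 1 + ordertype{p | p < o}.
   The ordinals 1 <= beta < alpha are then the 1 + ordertype{q | q < p}, p < o.
   Unions are indexed by K (i.e. of length kappa). *)
Inductive Sigma0 {T : Type} (op : (T -> Prop) -> Prop) {O : Type}
    (ltO : O -> O -> Prop) (K : Type) : O -> (T -> Prop) -> Prop :=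
| S_open o A : (forall p, ~ ltO p o) -> op A -> Sigma0 op ltO K o A
| S_union o A (f : K -> T -> Prop) :
    (exists p, ltO p o) ->
    (forall i, exists p, ltO p o /\ Sigma0 op ltO K p (fun x => ~ f i x)) ->
    eqset A (fun x => exists i, f i x) -> Sigma0 op ltO K o A.

Definition Pi0 {T : Type} (op : (T -> Prop) -> Prop) {O : Type}
    (ltO : O -> O -> Prop) (K : Type) (o : O) (A : T -> Prop) : Prop :=
  Sigma0 op ltO K o (fun x => ~ A x).

Definition is_universal {Y X : Type} (GammaX : (X -> Prop) -> Prop)
    (GammaYX : (Y * X -> Prop) -> Prop) (U : Y * X -> Prop) : Prop :=
  GammaYX U /\
  forall A : X -> Prop, GammaX A <-> exists y : Y, eqset A (fun x => U (y, x)).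

(* For X = (^kappa V, tau_I) and Y = ^kappa 2, for every 1 <= alpha < kappa^+
   and whatever topology is put on Y × X, neither Sigma^0_alpha(X) nor
   Pi^0_alpha(X) has a Y-universal set. *)
Definition no_universal_sets {K : Type} (I : (K -> Prop) -> Prop) (V : Type) : Prop :=
  forall (O : Type) (ltO : O -> O -> Prop) (o : O),
    is_strict_wellorder ltO -> (exists g : O -> K, inj g) ->
    forall opYX : ((K -> bool) * (K -> V) -> Prop) -> Prop,
      is_topology opYX ->
      (~ exists U, is_universal (Sigma0 (tauI I) ltO K o) (Sigma0 opYX ltO K o) U) /\
      (~ exists U, is_universal (Pi0 (tauI I) ltO K o) (Pi0 opYX ltO K o) U).

(* Fix D ∈ I of size κ, enumerated by an injection e.  Reading the coordinates
   of x along e gives a map ^κν -> ^κ2 which has a section and depends only on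
   x restricted to D; hence every preimage under it is τ_I-clopen and lies in
   every Σ^0_α and Π^0_α.  Cantor's diagonal argument, run through the section,
   shows that no family indexed by ^κ2 contains all these preimages. *)

From Stdlib Require Import Classical ClassicalDescription FunctionalExtensionality
  ProofIrrelevance.

Lemma gen_open_eqset {T : Type} (Bs : (T -> Prop) -> Prop) (A B : T -> Prop) :
  eqset A B -> gen_open Bs A -> gen_open Bs B.
Proof.
  intros HAB HA. apply (go_union _ B (fun C => C = A)).
  - intros C ->; exact HA.
  - intro x; split.
    + intro HBx; exists A; split; [reflexivity | apply HAB; exact HBx].
    + intros [C [-> HCx]]; apply HAB; exact HCx.
Qed.

Lemma tauI_determined {K V : Type} (I : (K -> Prop) -> Prop) (D : K -> Prop)
    (A : (K -> V) -> Prop) :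
  I D -> (forall x x', (forall i, D i -> x i = x' i) -> A x -> A x') -> tauI I A.
Proof.
  intros ID HA.
  apply (go_union _ A (fun C => exists x', A x' /\
           eqset C (fun z => forall i, D i -> z i = x' i))).
  - intros C [x' [_ HC]]. apply (go_basic _ C (fun z => forall i, D i -> z i = x' i)).
    + exists D, x'; split; [exact ID | intro z; split; auto].
    + exact HC.
  - intro x; split.
    + intro Hx. exists (fun z => forall i, D i -> z i = x i).
      split; [exists x; split; [exact Hx | intro z; split; auto] | auto].
    + intros [C [[x' [Hx' HC]] HCx]].
      apply (HA x'); [| exact Hx'].
      intros i Di; symmetry; exact (proj1 (HC x) HCx i Di).
Qed.

Lemma Sigma0_clopen {T : Type} (op : (T -> Prop) -> Prop) {O : Type}
    (ltO : O -> O -> Prop) (K : Type) (k0 : K) :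
  well_founded ltO -> (forall A B, eqset A B -> op A -> op B) ->
  forall o A, op A -> op (fun x => ~ A x) -> Sigma0 op ltO K o A.
Proof.
  intros Hwf Hop o. induction o as [o IH] using (well_founded_induction Hwf).
  intros A HA HnA.
  destruct (classic (exists p, ltO p o)) as [[p Hp] | Hmin].
  - apply (S_union op ltO K o A (fun _ => A)); [exists p; exact Hp | | ].
    + intros _. exists p; split; [exact Hp |].
      apply IH; [exact Hp | exact HnA |].
      apply (Hop A); [intro x; split; [auto | apply NNPP] | exact HA].
    + intro x; split; [intro Hx; exists k0; exact Hx | intros [_ Hx]; exact Hx].
  - apply S_open; [| exact HA]. intros p Hp; apply Hmin; exists p; exact Hp.
Qed.

Lemma no_universal_of_retraction {Y X : Type} (G : (X -> Prop) -> Prop)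
    (GYX : (Y * X -> Prop) -> Prop) (dec : X -> Y) (enc : Y -> X) :
  (forall y, dec (enc y) = y) -> (forall P : Y -> Prop, G (fun x => P (dec x))) ->
  ~ exists U, is_universal G GYX U.
Proof.
  intros Hdec HG [U [_ HU]].
  destruct (proj1 (HU _) (HG (fun y => ~ U (y, enc y)))) as [y0 Hy0].
  specialize (Hy0 (enc y0)); simpl in Hy0; rewrite Hdec in Hy0; tauto.
Qed.

Section Coding.

Variables (K V : Type) (v0 v1 : V) (e : K -> K).

Definition decode (x : K -> V) : K -> bool :=
  fun k => if excluded_middle_informative (x (e k) = v1) then true else false.

Definition encode (y : K -> bool) : K -> V :=
  fun j => if excluded_middle_informative (exists k, e k = j /\ y k = true)
           then v1 else v0.

Lemma decode_encode : v0 <> v1 -> inj e -> forall y, decode (encode y) = y.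
Proof.
  intros Hv He y. apply functional_extensionality; intro k. unfold decode, encode.
  destruct (excluded_middle_informative (exists k', e k' = e k /\ y k' = true))
    as [[k' [Hk' Hy]] | Hnot].
  - apply He in Hk'; subst k'. rewrite Hy.
    destruct (excluded_middle_informative (v1 = v1)); congruence.
  - destruct (excluded_middle_informative (v0 = v1)) as [E | _]; [congruence |].
    destruct (y k) eqn:Hy; [exfalso; apply Hnot; exists k; auto | reflexivity].
Qed.

Lemma decode_ext x x' : (forall k, x (e k) = x' (e k)) -> decode x = decode x'.
Proof.
  intro Hx. apply functional_extensionality; intro k. unfold decode.
  rewrite (Hx k); reflexivity.
Qed.

End Coding.

Lemma no_universal_sets_of_embedding (K V : Type) (I : (K -> Prop) -> Prop)
    (D : K -> Prop) (e : K -> K) (v0 v1 : V) (k0 : K) :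
  I D -> inj e -> (forall k, D (e k)) -> v0 <> v1 -> no_universal_sets I V.
Proof.
  intros ID He HeD Hv O ltO o [Hwf _] _ opYX _.
  assert (Hpreimage : forall P : (K -> bool) -> Prop,
             tauI I (fun x => P (decode K V v1 e x))).
  { intro P. apply (tauI_determined I D _ ID).
    intros x x' Hxx'. rewrite (decode_ext K V v1 e x x'); auto. }
  assert (Hclopen : forall P : (K -> bool) -> Prop,
             Sigma0 (tauI I) ltO K o (fun x => P (decode K V v1 e x))).
  { intro P. apply (Sigma0_clopen _ _ K k0 Hwf (gen_open_eqset _));
      [apply Hpreimage | apply (Hpreimage (fun y => ~ P y))]. }
  split; apply (no_universal_of_retraction _ _ _ (encode K V v0 v1 e)
                  (decode_encode K V v0 v1 e Hv He)).
  - exact Hclopen.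
  - intro P; exact (Hclopen (fun y => ~ P y)).
Qed.

Lemma regular_embeds_unbounded {K : Type} (lt : K -> K -> Prop) (D : K -> Prop) :
  is_regular lt -> ~ bounded lt D -> exists e : K -> K, inj e /\ forall k, D (e k).
Proof.
  intros Hreg HD. destruct (Hreg D HD) as [f Hf].
  exists (fun k => proj1_sig (f k)); split; [| intro k; exact (proj2_sig (f k))].
  intros a b Hab. apply Hf. destruct (f a), (f b); simpl in Hab; subst.
  f_equal; apply proof_irrelevance.
Qed.

Lemma uncountable_two_points (K : Type) : uncountable K -> exists a b : K, a <> b.
Proof.
  intro Hunc. apply NNPP; intro Hsingle. apply Hunc.
  exists (fun _ => 0). intros a b _.
  apply NNPP; intro Hab; apply Hsingle; exists a, b; exact Hab.
Qed.

Theorem proposition4p10 (K : Type) (lt : K -> K -> Prop) (I : (K -> Prop) -> Prop)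
  (Hwo : is_strict_wellorder lt) (Hcard : is_cardinal lt)
  (Hunc : uncountable K) (Hreg : is_regular lt)
  (HI : kappa_complete_proper_ideal lt I)
  (Hbdd : forall B : K -> Prop, bounded lt B -> I B)
  (Hunb : exists B : K -> Prop, I B /\ ~ bounded lt B) :
  no_universal_sets I bool /\ no_universal_sets I K.
Proof.
  destruct Hunb as [D [ID HD]].
  destruct (regular_embeds_unbounded lt D Hreg HD) as [e [He HeD]].
  destruct (uncountable_two_points K Hunc) as [a [b Hab]].
  split.
  - exact (no_universal_sets_of_embedding K bool I D e false true a ID He HeD
             ltac:(discriminate)).
  - exact (no_universal_sets_of_embedding K K I D e a b a ID He HeD Hab).
Qed.
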